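(* Let $G$ be a graph and $S\subseteq V(G)$. Then one can admissibly remove a subset of $S$ from $G$ such that, in the remaining graph, the remaining vertices of $S$ form a clique and each of them has odd degree in the remaining graph.
   Context: Removing a set $T$ of vertices from a graph $G$ is a simple admissible removal if $T$ is an independent set in $G$ and the number of edges between $T$ and $V(G)\setminus T$ is even. Removing a (not necessarily independent) set of vertices is admissible if it can be realised by a sequence of simple admissible removals, each performed in the graph remaining after the previous ones. Degrees are always taken in the current remaining graph. *)

(* A (finite simple) graph is a symmetric irreflexive
   relation e on a finite vertex type T.  A "remaining graph" is the
   induced subgraph on a vertex set R : {set T}. *)
From mathcomp Require Import all_boot.
Set Implicit Arguments. Unset Strict Implicit. Unset Printing Implicit Defensive.

Section Graphs.
Variable T : finType.
Variable e : rel T.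

Definition deg_in (R : {set T}) (x : T) : nat := #|[set y in R | e x y]|.

Definition independent_in (R X : {set T}) : bool :=
  [forall x in X, forall y in X, ~~ e x y].

(* number of edges of G[R] between X and R \ X (X disjoint from R \ X, so
   each such edge is counted exactly once as an ordered pair) *)
Definition cut_size (R X : {set T}) : nat :=
  #|[set p : T * T | [&& p.1 \in X, p.2 \in R :\: X & e p.1 p.2]]|.

Definition simple_admissible (R X : {set T}) : bool :=
  [&& X \subset R, independent_in R X & ~~ odd (cut_size R X)].

Inductive admissible : {set T} -> {set T} -> Prop :=
| adm_refl R : admissible R R
| adm_step R X R' : simple_admissible R X -> admissible (R :\: X) R' ->
                    admissible R R'.

Definition clique_in (R C : {set T}) : bool :=
  (C \subset R) && [forall x in C, forall y in C, (x != y) ==> e x y].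

End Graphs.

(** Induct on the number of remaining vertices.  If some remaining vertex of
    [S] has even degree, remove it alone: its cut is its degree.  Otherwise all
    remaining vertices of [S] have odd degree; if two of them are non-adjacent,
    remove both: the cut of an independent set is the sum of the degrees, here
    odd + odd.  When neither move applies, the remaining vertices of [S] form a
    clique of odd-degree vertices. *)
From mathcomp Require Import all_boot.

Set Implicit Arguments.
Unset Strict Implicit.
Unset Printing Implicit Defensive.

Section AdmissibleRemoval.

Variables (T : finType) (e : rel T).

Lemma cut_size_sum (R X : {set T}) :
  cut_size e R X = \sum_(x in X) #|[set y in R :\: X | e x y]|.
Proof.
rewrite /cut_size -sum1_card.
rewrite (eq_bigr (fun x => \sum_(y in [set y in R :\: X | e x y]) 1)) => [|x _];
  last by rewrite sum1_card.
by rewrite pair_big_dep; apply: eq_bigl => -[a b]; rewrite !inE.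
Qed.

Lemma cut_size_independent (R X : {set T}) : independent_in e R X ->
  cut_size e R X = \sum_(x in X) deg_in e R x.
Proof.
move=> /forall_inP indX; rewrite cut_size_sum; apply: eq_bigr => x xX.
apply: eq_card => y; rewrite !inE.
case: (boolP (y \in X)) => //= yX.
by rewrite (negbTE (forall_inP (indX x xX) y yX)) andbF.
Qed.

Lemma simple_admissible_independent (R X : {set T}) :
  X \subset R -> independent_in e R X -> ~~ odd (\sum_(x in X) deg_in e R x) ->
  simple_admissible e R X.
Proof.
by move=> XR indX even_sum; rewrite /simple_admissible XR indX cut_size_independent.
Qed.

Lemma card_setD_lt (R X : {set T}) :
  X \subset R -> X != set0 -> #|R :\: X| < #|R|.
Proof.
move=> XR /set0Pn[x xX]; apply: proper_card; apply/properP; split; first exact: subsetDl.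
by exists x; rewrite ?inE ?xX ?(subsetP XR).
Qed.

Hypotheses (e_sym : symmetric e) (e_irr : irreflexive e).

Lemma independent_set1 (R : {set T}) x : independent_in e R [set x].
Proof. by apply/forall_inP => a /set1P ->; apply/forall_inP => b /set1P ->; rewrite e_irr. Qed.

Lemma independent_set2 (R : {set T}) x y : ~~ e x y -> independent_in e R [set x; y].
Proof.
move=> nexy; apply/forall_inP => a /set2P[] ->; apply/forall_inP => b /set2P[] ->;
  by rewrite ?e_irr // e_sym.
Qed.

Lemma simple_admissible_set1 (R : {set T}) x :
  x \in R -> ~~ odd (deg_in e R x) -> simple_admissible e R [set x].
Proof.
move=> xR even_x; apply: (simple_admissible_independent _ (independent_set1 R x)).
- by rewrite sub1set.
- by rewrite big_set1.
Qed.

Lemma simple_admissible_set2 (R : {set T}) x y :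
  x \in R -> y \in R -> x != y -> ~~ e x y ->
  odd (deg_in e R x) -> odd (deg_in e R y) -> simple_admissible e R [set x; y].
Proof.
move=> xR yR nxy nexy odd_x odd_y.
apply: (simple_admissible_independent _ (independent_set2 R nexy)).
- by apply/subsetP => z /set2P[] ->.
- by rewrite big_setU1 ?inE //= big_set1 oddD odd_x odd_y.
Qed.

Variable S : {set T}.

Definition odd_clique_reachable (R : {set T}) : Prop :=
  exists R', [/\ admissible e R R', R :\: R' \subset S,
                 clique_in e R' (S :&: R')
               & forall x, x \in S :&: R' -> odd (deg_in e R' x)].

Lemma odd_clique_reachable_step (R X : {set T}) :
  simple_admissible e R X -> X \subset S ->
  odd_clique_reachable (R :\: X) -> odd_clique_reachable R.
Proof.
move=> admX XS [R' [admR' R'S cliqueR' oddR']].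
exists R'; split=> //; first exact: adm_step admX admR'.
apply/subsetP => z /setDP[zR zR']; case: (boolP (z \in X)) => [/(subsetP XS) //|zX].
by apply: (subsetP R'S); rewrite !inE zR zX zR'.
Qed.

Lemma odd_clique_reachable_stop (R : {set T}) :
  (forall x, x \in S :&: R -> odd (deg_in e R x)) ->
  (forall x y, x \in S :&: R -> y \in S :&: R -> x != y -> e x y) ->
  odd_clique_reachable R.
Proof.
move=> oddR adjR; exists R; split=> //; first exact: adm_refl.
- by rewrite setDv sub0set.
- rewrite /clique_in subsetIr; apply/forall_inP => x xSR; apply/forall_inP => y ySR.
  by apply/implyP; apply: adjR.
Qed.

Lemma odd_clique_always_reachable (R : {set T}) : odd_clique_reachable R.
Proof.
elim: {R}_.+1 {-2}R (ltnSn #|R|) => // n IH R ltRn.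
have IHD (X : {set T}) : X \subset R -> X != set0 -> odd_clique_reachable (R :\: X).
  by move=> XR X0; apply: IH; apply: leq_trans (card_setD_lt XR X0) _; rewrite -ltnS.
case: (pickP [pred x | (x \in S :&: R) && ~~ odd (deg_in e R x)]).
  move=> x /andP[xSR even_x]; have /setIP[xS xR] := xSR.
  apply: (odd_clique_reachable_step (simple_admissible_set1 xR even_x)).
    by rewrite sub1set.
  by apply: IHD; rewrite ?sub1set // -cards_eq0 cards1.
move=> all_odd; have oddR x : x \in S :&: R -> odd (deg_in e R x).
  by move=> xSR; move: (all_odd x); rewrite /= xSR => /negbFE.
case: (pickP [pred p : T * T |
              [&& p.1 \in S :&: R, p.2 \in S :&: R, p.1 != p.2 & ~~ e p.1 p.2]]).
  move=> [x y] /and4P[/= xSR ySR nxy nexy].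
  have [/setIP[xS xR] /setIP[yS yR]] := (xSR, ySR).
  have xyS : [set x; y] \subset S by apply/subsetP => z /set2P[] ->.
  have xyR : [set x; y] \subset R by apply/subsetP => z /set2P[] ->.
  apply: (odd_clique_reachable_step _ xyS).
    exact: simple_admissible_set2 nxy nexy (oddR x xSR) (oddR y ySR).
  by apply: IHD => //; apply/set0Pn; exists x; rewrite !inE eqxx.
move=> no_pair; apply: odd_clique_reachable_stop => // x y xSR ySR nxy.
by move: (no_pair (x, y)); rewrite /= xSR ySR nxy => /negbFE.
Qed.

End AdmissibleRemoval.

Theorem mainTheorem6 (T : finType) (e : rel T)
  (e_sym : symmetric e) (e_irr : irreflexive e) (S : {set T}) :
  exists R : {set T},
    [/\ admissible e [set: T] R,
        ~: R \subset S,
        clique_in e R (S :&: R)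
      & forall x, x \in S :&: R -> odd (deg_in e R x)].
Proof.
have [R [admR removedS cliqueR oddR]] := odd_clique_always_reachable e_sym e_irr S [set: T].
by exists R; split=> //; rewrite -setTD.
Qed.
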